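(* Let $X=\{1,\dots,n\}$, $Y$ finite, $Q$ a symmetric irreducible stochastic matrix on $Y$ (notation in context). Let $1\le k\le n-1$, let $\underline a=(a_0,\dots,a_m)$ be a type with $a_0+\cdots+a_m=k+1$ and $a_0\ge1$, $\underline a'=(a_0-1,a_1,\dots,a_m)$, $A\subseteq X$ with $|A|=k$, and $F\in P_{k,\underline a',A}$. Then $$D_{k+1,\underline a}D^*_{k+1,\underline a}F=|Y|(n-k)\,F+Q_kF.$$
   Context: $Q$ acts on $L(Y)$ by $(Qf)(y)=\sum_{y'}q(y,y')f(y')$, with distinct eigenvalues $\lambda_0=1,\dots,\lambda_m$ and eigenspaces $W_0$ (constants), $W_1,\dots,W_m$; $\sum_yf(y)=0$ for $f\in W_j$, $j\ge1$. $\Theta_k$: functions $\theta$ with $\mathrm{dom}(\theta)$ a $k$-subset of $X$ and values in $Y$; $\varphi\subseteq\theta$ means $\mathrm{dom}\varphi\subseteq\mathrm{dom}\theta$ and $\theta|_{\mathrm{dom}\varphi}=\varphi$. $D_k:L(\Theta_k)\to L(\Theta_{k-1})$, $(D_kF)(\varphi)=\sum_{\theta\supseteq\varphi}F(\theta)$; $D_k^*:L(\Theta_{k-1})\to L(\Theta_k)$, $(D_k^*F)(\theta)=\sum_{\varphi\subseteq\theta}F(\varphi)$. Types $\underline a=(a_0,\dots,a_m)$, $\ell(\underline a)=a_1+\cdots+a_m$. A fundamental function of type $\underline b$ on a $k$-set $A$ is $F=\bigotimes_{j\in A}F^j$ ($F(\theta)=\prod_{j\in A}F^j(\theta(j))$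 on $Y^A$, $0$ elsewhere) with each $F^j$ in some $W_{i_j}$ and exactly $b_i$ indices $j$ with $i_j=i$; $P_{k,\underline b,A}$ is their span and $P_{k,\underline b}=\bigoplus_AP_{k,\underline b,A}$. $D_{k+1,\underline a}$ is $D_{k+1}$ restricted to $P_{k+1,\underline a}$ and $D^*_{k+1,\underline a}$ is $D^*_{k+1}$ restricted to $P_{k,\underline a'}$. The operator $Q_k$ on $L(\Theta_k)$ is defined on a fundamental function $F=\bigotimes_{j\in A}F^j$ and extended linearly: for $\theta\in\Theta_k$ with $|\mathrm{dom}\theta\cap A|=k-1$, $A\setminus\mathrm{dom}\theta=\{i\}$, $\mathrm{dom}\theta\setminus A=\{i_0\}$, $(Q_kF)(\theta)=|Y|F(\bar\theta)$ if $F^i\in W_0$ and $0$ if $F^i\notin W_0$, where $\bar\theta\in Y^A$ agrees with $\theta$ on $A\setminus\{i\}$ and $\bar\theta(i)=\theta(i_0)$; for all other $\theta$, $(Q_kF)(\theta)=0$. *)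

From HB Require Import structures.
From mathcomp Require Import all_boot all_order all_algebra.
Set Implicit Arguments. Unset Strict Implicit. Unset Printing Implicit Defensive.
Import Order.TTheory GRing.Theory Num.Theory.
Local Open Scope ring_scope.

Section Defs.
Variable R : realFieldType.
Variable Y : finType.

Definition Qop (q : Y -> Y -> R) (f : Y -> R) (y : Y) : R :=
  \sum_(y' : Y) q y y' * f y'.

Fixpoint qpow (q : Y -> Y -> R) (t : nat) (x y : Y) : R :=
  match t with
  | 0%N => (x == y)%:R
  | t'.+1 => \sum_(z : Y) qpow q t' x z * q z y
  end.

Definition irreducible_mat (q : Y -> Y -> R) : Prop :=
  forall x y : Y, exists t : nat, 0 < qpow q t x y.

Definition in_eigenspace (q : Y -> Y -> R) (mu : R) (f : Y -> R) : Prop :=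
  forall y, Qop q f y = mu * f y.

(* boolean version (used for the test "F^i in W_0", with lambda_0 = 1) *)
Definition in_W0b (q : Y -> Y -> R) (f : Y -> R) : bool :=
  [forall y, Qop q f y == f y].

Variable n : nat.
(* X = 'I_n.  A partial function theta : X -> Y is encoded as a total function
   X -> option Y; dom theta = the points where it is not None. *)
Definition pfun := {ffun 'I_n -> option Y}.

Definition pdom (th : pfun) : {set 'I_n} := [set x | th x != None].

Definition subpf (ph th : pfun) : bool :=
  [forall x, (ph x != None) ==> (ph x == th x)].

(* D_k : L(Theta_k) -> L(Theta_{k-1}); functions on Theta_j are encoded as
   functions on all partial functions, with value 0 off Theta_j. *)
Definition Dop (k : nat) (F : pfun -> R) (ph : pfun) : R :=
  if #|pdom ph| == k.-1 then
    \sum_(th : pfun | (#|pdom th| == k) && subpf ph th) F th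
  else 0.

Definition Dsop (k : nat) (F : pfun -> R) (th : pfun) : R :=
  if #|pdom th| == k then
    \sum_(ph : pfun | (#|pdom ph| == k.-1) && subpf ph th) F ph
  else 0.

Definition evalY (f : Y -> R) (o : option Y) : R :=
  match o with Some y => f y | None => 0 end.

Definition fundF (A : {set 'I_n}) (Fj : 'I_n -> Y -> R) (th : pfun) : R :=
  if pdom th == A then \prod_(j in A) evalY (Fj j) (th j) else 0.

(* Data of a fundamental function of type b on A: each F^j (j in A) lies in
   W_{idx j} (eigenspace of lam (idx j)), and exactly b i indices j in A have
   idx j = i. *)
Definition fund_data (q : Y -> Y -> R) (m : nat) (lam : 'I_m.+1 -> R)
    (b : 'I_m.+1 -> nat) (A : {set 'I_n})
    (idx : 'I_n -> 'I_m.+1) (Fj : 'I_n -> Y -> R) : Prop :=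
  (forall j, j \in A -> in_eigenspace q (lam (idx j)) (Fj j)) /\
  (forall i, #|[set j in A | idx j == i]| = b i).

(* Q_k on the fundamental function (x)_{j in A} F^j, as in the paper:
   for theta in Theta_k with |dom theta :&: A| = k-1, A \ dom theta = {i},
   dom theta \ A = {i0}: value |Y| F(bar theta) if F^i in W_0, else 0,
   where bar theta agrees with theta on A\{i} and bar theta(i) = theta(i0);
   0 for all other theta.  (The sums over i, i0 range over singletons.) *)
Definition Qfund (q : Y -> Y -> R) (k : nat) (A : {set 'I_n})
    (Fj : 'I_n -> Y -> R) (th : pfun) : R :=
  if (#|pdom th| == k) && (#|pdom th :&: A| == k.-1) then
    \sum_(i in A :\: pdom th) \sum_(i0 in pdom th :\: A)
      (if in_W0b q (Fj i) then
         #|Y|%:R * \prod_(j in A) evalY (Fj j) (if j == i then th i0 else th j)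
       else 0)
  else 0.

End Defs.

Definition type_prime (m : nat) (a : 'I_m.+1 -> nat) (i : 'I_m.+1) : nat :=
  if i == ord0 then (a i).-1 else a i.

From HB Require Import structures.
From mathcomp Require Import all_boot all_order all_algebra.
Set Implicit Arguments. Unset Strict Implicit. Unset Printing Implicit Defensive.
Import Order.TTheory GRing.Theory Num.Theory.
Local Open Scope ring_scope.

(* Applying D_{k+1}^* and then D_{k+1} to F at theta sums F over all ways of
   adding a point x outside dom theta with a value y, then deleting a point z of
   the enlarged domain.  Deleting z = x gives back theta, which accounts for
   |Y|(n-k) F(theta).  Otherwise the new domain is A only when x is in A but not
   in dom theta and z is in dom theta but not in A; summing the fundamental
   function over y then yields sum_y F^x(y).  This is |Y| F^x(theta z) when
   F^x is in W_0, since by irreducibility Q-fixed vectors are constant, and 0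
   otherwise, since symmetry makes Q doubly stochastic, so sum_y (Qf)(y) =
   sum_y f(y) and the eigenvalue differs from 1.  What remains is Q_k F. *)

Lemma setD_cardS (T : finType) (B C : {set T}) :
  B \subset C -> #|C| = #|B|.+1 -> exists x, C :\: B = [set x].
Proof. by move=> sBC cardC; apply/cards1P; rewrite cardsDS // cardC subSnn. Qed.

Lemma eq_setD1U1 (T : finType) (D A : {set T}) x z :
  x \notin D -> z \in D -> #|A| = #|D| ->
  ((x |: D) :\ z == A) = [&& x \in A, z \notin A & #|D :&: A| == #|D|.-1].
Proof.
move=> xD zD cardA.
have xz : x != z by apply: contraNneq xD => ->.
have cardDz : #|D :\ z| = #|D|.-1 by rewrite (cardsD1 z D) zD.
have U1D1 : (x |: D) :\ z = x |: (D :\ z).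
  by apply/setP => j; rewrite !inE; case: (j =P x) => // ->; rewrite xz.
rewrite U1D1; apply/eqP/idP => [<- | /and3P [xA zA /eqP cardDA]].
  rewrite !inE eqxx /=.
  have -> : D :&: (x |: D :\ z) = D :\ z.
    apply/setP => j; rewrite !inE.
    case: (j =P x) => [->|_]; first by rewrite (negbTE xD) andbF.
    by rewrite andbCA andbb.
  by rewrite eq_sym (negbTE xz) eqxx cardDz eqxx.
have DA : D :&: A = D :\ z.
  apply/eqP; rewrite eqEcard cardDA cardDz leqnn andbT.
  apply/subsetP => j; rewrite !inE => /andP [jD jA]; rewrite jD andbT.
  by apply: contraNneq zA => <-.
apply/eqP; rewrite eqEcard cardsU1 cardDz !inE (negbTE xD) andbF /= cardA.
by rewrite -DA subUset sub1set xA subsetIr /= add1n leqSpred.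
Qed.

Section PartialFunctions.
Variables (Y : finType) (n : nat).
Implicit Types (th ph : pfun Y n) (x z : 'I_n) (y : Y).

Definition pf_upd th x y : pfun Y n := [ffun j => if j == x then Some y else th j].
Definition pf_rem th z : pfun Y n := [ffun j => if j == z then None else th j].

Lemma pdom_upd th x y : pdom (pf_upd th x y) = x |: pdom th.
Proof. by apply/setP => j; rewrite !inE ffunE; case: (j =P x). Qed.

Lemma pdom_rem th z : pdom (pf_rem th z) = pdom th :\ z.
Proof. by apply/setP => j; rewrite !inE ffunE; case: (j =P z). Qed.

Lemma pf_rem_upd th x y : x \notin pdom th -> pf_rem (pf_upd th x y) x = th.
Proof.
rewrite inE negbK => /eqP thx; apply/ffunP => j; rewrite !ffunE.
by case: (j =P x) => [->|].
Qed.

Lemma subpf_eq ph th j : subpf ph th -> ph j != None -> th j = ph j.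
Proof. by move=> /forallP/(_ j); rewrite /= => /implyP H /H /eqP. Qed.

Lemma subpf_pdom ph th : subpf ph th -> pdom ph \subset pdom th.
Proof.
by move=> sub; apply/subsetP => j; rewrite !inE => phj; rewrite (subpf_eq sub phj).
Qed.

Lemma subpf_eq_out ph th x j : subpf ph th -> pdom th :\: pdom ph = [set x] ->
  j != x -> th j = ph j.
Proof.
move=> sub domD jx; have [phj|/negbNE/eqP phj] := boolP (ph j != None).
  exact: subpf_eq.
rewrite phj; apply/eqP; apply: contraNT jx => thj.
by rewrite -in_set1 -domD !inE thj phj.
Qed.

Lemma subpf_upd th x y : x \notin pdom th -> subpf th (pf_upd th x y).
Proof.
move=> xth; apply/forallP => j; apply/implyP => thj; rewrite ffunE.
by case: (j =P x) => // jx; move: xth; rewrite -jx inE thj.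
Qed.

Lemma subpf_rem th z : subpf (pf_rem th z) th.
Proof.
by apply/forallP => j; rewrite ffunE; case: ifP => // _; rewrite eqxx implybT.
Qed.

Lemma big_subpf_ext (R : nmodType) (f : pfun Y n -> R) th :
  \sum_(th' | (#|pdom th'| == (#|pdom th|).+1) && subpf th th') f th' =
  \sum_(x in ~: pdom th) \sum_(y : Y) f (pf_upd th x y).
Proof.
rewrite pair_big_dep (eq_bigl (mem [set p : 'I_n * Y | p.1 \notin pdom th])); last first.
  by move=> p; rewrite !inE andbT.
rewrite -(big_imset f (h := fun p => pf_upd th p.1 p.2)) /=.
  apply: eq_bigl => th'; apply/andP/imsetP => [[/eqP cardth' sub]|].
    have [x domD] := setD_cardS (subpf_pdom sub) cardth'.
    have : x \in pdom th' :\: pdom th by rewrite domD set11.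
    rewrite !inE => /andP [xth th'x].
    case thx': (th' x) => [y|]; last by rewrite thx' in th'x.
    exists (x, y); first by rewrite !inE.
    apply/ffunP => j; rewrite ffunE /=.
    by case: (j =P x) => [->|/eqP jx] //; rewrite (subpf_eq_out sub domD jx).
  move=> [[x y]]; rewrite inE /= => xth ->.
  by rewrite pdom_upd cardsU1 xth subpf_upd.
move=> [x y] [x' y']; rewrite !inE /= => xth _ /ffunP/(_ x).
rewrite !ffunE eqxx; case: (x =P x') => [<- [->] //|_ thx].
by rewrite -thx in xth.
Qed.

Lemma big_subpf_rem (R : nmodType) (f : pfun Y n -> R) th k :
  #|pdom th| = k.+1 ->
  \sum_(ph | (#|pdom ph| == k) && subpf ph th) f ph =
  \sum_(z in pdom th) f (pf_rem th z).
Proof.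
move=> cardth; rewrite -(big_imset f (h := pf_rem th)) /=.
  apply: eq_bigl => ph; apply/andP/imsetP => [[/eqP cardph sub]|[z zth ->]].
    have cardS : #|pdom th| = #|pdom ph|.+1 by rewrite cardth cardph.
    have [z domD] := setD_cardS (subpf_pdom sub) cardS.
    have : z \in pdom th :\: pdom ph by rewrite domD set11.
    rewrite !inE => /andP [phz thz]; exists z; first by rewrite inE.
    apply/ffunP => j; rewrite ffunE.
    case: (j =P z) => [->|/eqP jz]; first by move/negbNE/eqP: phz.
    exact/esym/(subpf_eq_out sub domD jz).
  by rewrite pdom_rem subpf_rem; move: cardth; rewrite (cardsD1 z) zth add1n => -[->].
move=> z z' zth _ /ffunP/(_ z); rewrite !ffunE eqxx.
by case: (z =P z') => // _ /esym/eqP; move: zth; rewrite inE => /negbTE ->.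
Qed.

End PartialFunctions.

Section DualOperators.
Variables (R : realFieldType) (Y : finType) (n : nat).
Implicit Types (th : pfun Y n) (G : pfun Y n -> R).

Lemma Dop_sum (I : finType) (c : I -> R) (G : I -> pfun Y n -> R) k th :
  Dop k (fun th' => \sum_i c i * G i th') th = \sum_i c i * Dop k (G i) th.
Proof.
rewrite /Dop; case: ifP => _; last by rewrite big1 // => i _; rewrite mulr0.
by rewrite exchange_big; apply: eq_bigr => i _; rewrite mulr_sumr.
Qed.

Lemma Dsop_sum (I : finType) (c : I -> R) (G : I -> pfun Y n -> R) k th :
  Dsop k (fun th' => \sum_i c i * G i th') th = \sum_i c i * Dsop k (G i) th.
Proof.
rewrite /Dsop; case: ifP => _; last by rewrite big1 // => i _; rewrite mulr0.
by rewrite exchange_big; apply: eq_bigr => i _; rewrite mulr_sumr.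
Qed.

Lemma DDsop_sum (I : finType) (c : I -> R) (G : I -> pfun Y n -> R) k k' th :
  Dop k (Dsop k' (fun th' => \sum_i c i * G i th')) th =
  \sum_i c i * Dop k (Dsop k' (G i)) th.
Proof.
rewrite -Dop_sum /Dop; case: ifP => // _.
by apply: eq_bigr => th' _; rewrite Dsop_sum.
Qed.

Lemma DDsop_expand G k th : #|pdom th| = k ->
  Dop k.+1 (Dsop k.+1 G) th =
  #|Y|%:R * (n - k)%:R * G th +
  \sum_(x in ~: pdom th) \sum_(z in pdom th) \sum_(y : Y) G (pf_rem (pf_upd th x y) z).
Proof.
move=> cardth; rewrite /Dop cardth eqxx.
have := big_subpf_ext (Dsop k.+1 G) th; rewrite cardth => ->.
have cardC : #|~: pdom th| = (n - k)%N.
  by rewrite -(addKn #|pdom th| #|~: pdom th|) cardsC card_ord cardth.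
transitivity (\sum_(x in ~: pdom th) \sum_(y : Y)
    (G th + \sum_(z in pdom th) G (pf_rem (pf_upd th x y) z))).
  apply: eq_bigr => x; rewrite inE => xth; apply: eq_bigr => y _.
  have cardU : #|pdom (pf_upd th x y)| = k.+1 by rewrite pdom_upd cardsU1 xth cardth.
  rewrite /Dsop cardU eqxx (big_subpf_rem _ cardU) pdom_upd big_setU1 //=.
  by rewrite pf_rem_upd.
under eq_bigr do rewrite big_split /=.
rewrite big_split /= !sumr_const cardC; congr (_ + _).
  by rewrite -natrM mulr_natl mulrnA.
by apply: eq_bigr => x _; rewrite exchange_big.
Qed.

End DualOperators.

Section StochasticMatrix.
Variables (R : realFieldType) (Y : finType) (q : Y -> Y -> R).
Hypothesis q_ge0 : forall x y, 0 <= q x y.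
Hypothesis q_stoch : forall x, \sum_y q x y = 1.
Implicit Type f : Y -> R.

(* [f z] is a [q z]-weighted mean of values [<= f yM], so [f z = f yM] forces
   [f w = f yM] wherever [q z w > 0]. *)
Lemma fixed_Qop_max_edge f yM z w :
  (forall y, Qop q f y = f y) -> (forall y, f y <= f yM) ->
  f z = f yM -> f w != f yM -> q z w = 0.
Proof.
move=> fixf maxf fz fw.
have gap_ge0 w' : predT w' -> 0 <= q z w' * (f yM - f w').
  by move=> _; rewrite mulr_ge0 ?subr_ge0.
have gap_sum : \sum_w' q z w' * (f yM - f w') = 0.
  under eq_bigr do rewrite mulrBr.
  by rewrite sumrB -mulr_suml q_stoch mul1r -[X in _ - X]/(Qop q f z) fixf fz subrr.
have /eqP := psumr_eq0P gap_ge0 gap_sum (isT : predT w).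
by rewrite mulf_eq0 subr_eq0 [f yM == _]eq_sym (negbTE fw) orbF => /eqP.
Qed.

Lemma fixed_Qop_max_qpow f yM t w :
  (forall y, Qop q f y = f y) -> (forall y, f y <= f yM) ->
  f w != f yM -> qpow q t yM w = 0.
Proof.
move=> fixf maxf; elim: t w => [|t IH] w fw /=.
  by case: (yM =P w) fw => [<-|]; rewrite ?eqxx.
apply: big1 => z _; have [fz|fz] := eqVneq (f z) (f yM).
  by rewrite (fixed_Qop_max_edge fixf maxf fz fw) mulr0.
by rewrite IH ?mul0r.
Qed.

Lemma fixed_Qop_const f : irreducible_mat q ->
  (forall y, Qop q f y = f y) -> forall y y0, f y = f y0.
Proof.
move=> irr fixf y y0.
have [yM _ maxf] := @arg_maxP _ R Y y0 predT f isT.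
suff fM w : f w = f yM by rewrite !fM.
apply/eqP; apply: contraT => fw; have [t /gt_eqF/eqP] := irr yM w.
by rewrite (fixed_Qop_max_qpow t fixf (fun y => maxf y isT) fw).
Qed.

Hypothesis q_sym : forall x y, q x y = q y x.

Lemma sum_Qop f : \sum_y Qop q f y = \sum_y f y.
Proof.
rewrite /Qop exchange_big; apply: eq_bigr => y' _.
by rewrite -mulr_suml (eq_bigr _ (fun y _ => q_sym y y')) q_stoch mul1r.
Qed.

Lemma sum_eigenspace f mu : irreducible_mat q -> in_eigenspace q mu f ->
  forall y0, \sum_y f y = if in_W0b q f then #|Y|%:R * f y0 else 0.
Proof.
move=> irr eigf y0; case: ifP => [/forallP W0f | notW0f].
  have fixf y : Qop q f y = f y by apply/eqP/W0f.
  by rewrite (eq_bigr _ (fun y _ => fixed_Qop_const irr fixf y y0)) sumr_const mulr_natl.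
have mu1 : mu != 1.
  apply: contraFneq notW0f => mu1; apply/forallP => y.
  by rewrite eigf mu1 mul1r.
have := sum_Qop f; rewrite (eq_bigr _ (fun y _ => eigf y)) -mulr_sumr.
move/eqP; rewrite -subr_eq0 -{2}[\sum_y f y]mul1r -mulrBl mulf_eq0 subr_eq0.
by rewrite (negbTE mu1) => /eqP.
Qed.

End StochasticMatrix.

Section FundamentalFunction.
Variables (R : realFieldType) (Y : finType) (n : nat) (q : Y -> Y -> R).
Variables (k : nat) (A : {set 'I_n}) (Fj : 'I_n -> Y -> R).
Hypothesis cardA : #|A| = k.
Hypothesis sum_Fj : forall j, j \in A ->
  forall y0, \sum_y Fj j y = if in_W0b q (Fj j) then #|Y|%:R * Fj j y0 else 0.
Implicit Type th : pfun Y n.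

Lemma sum_prod_upd_rem th x z : x \in A -> z \notin A -> z \in pdom th ->
  \sum_y \prod_(j in A) evalY (Fj j) (pf_rem (pf_upd th x y) z j) =
  if in_W0b q (Fj x) then
    #|Y|%:R * \prod_(j in A) evalY (Fj j) (if j == x then th z else th j)
  else 0.
Proof.
move=> xA zA; rewrite inE; case thz: (th z) => [y0|] // _.
have xz : (x == z) = false by apply: contraNF zA => /eqP <-.
pose P := \prod_(j in A | j != x) evalY (Fj j) (th j).
transitivity (\sum_y Fj x y * P).
  apply: eq_bigr => y _; rewrite (bigD1 x xA) /= !ffunE xz eqxx /=.
  congr (_ * _); apply: eq_bigr => j /andP [jA jx].
  by rewrite !ffunE (negbTE jx) (_ : j == z = false) //; apply: contraNF zA => /eqP <-.
rewrite -mulr_suml (sum_Fj xA y0) (bigD1 x xA) /= eqxx.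
rewrite (eq_bigr (fun j => evalY (Fj j) (th j))) => [|j /andP [_ /negbTE ->] //].
by case: ifP; rewrite ?mul0r ?mulrA.
Qed.

Lemma sum_fundF_upd_rem th : #|pdom th| = k ->
  \sum_(x in ~: pdom th) \sum_(z in pdom th) \sum_y
    fundF A Fj (pf_rem (pf_upd th x y) z) =
  Qfund q k A Fj th.
Proof.
move=> cardth; rewrite /Qfund cardth eqxx /=.
have domE x z y : x \in ~: pdom th -> z \in pdom th ->
    (pdom (pf_rem (pf_upd th x y) z) == A) =
    [&& x \in A, z \notin A & #|pdom th :&: A| == k.-1].
  by rewrite inE pdom_rem pdom_upd => xth zth; rewrite eq_setD1U1 ?cardth.
have [cardI|cardI] := eqVneq #|pdom th :&: A| k.-1; last first.
  apply: big1 => x xth; apply: big1 => z zth; apply: big1 => y _.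
  by rewrite /fundF domE // (negbTE cardI) !andbF.
rewrite [RHS](eq_bigl (fun x => (x \in ~: pdom th) && (x \in A))); last first.
  by move=> x; rewrite !inE andbC.
rewrite big_mkcondr; apply: eq_bigr => x xth; case: ifP => xA; last first.
  apply: big1 => z zth; apply: big1 => y _.
  by rewrite /fundF domE // xA.
rewrite [RHS](eq_bigl (fun z => (z \in pdom th) && (z \notin A))); last first.
  by move=> z; rewrite !inE andbC.
rewrite [RHS]big_mkcondr; apply: eq_bigr => z zth; case: ifP => zA; last first.
  by apply: big1 => y _; rewrite /fundF domE // xA zA.
rewrite -(sum_prod_upd_rem xA zA zth); apply: eq_bigr => y _.
by rewrite /fundF domE // xA zA cardI eqxx.
Qed.

Lemma DDsop_fundF th :
  Dop k.+1 (Dsop k.+1 (fundF A Fj)) th =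
  #|Y|%:R * (n - k)%:R * fundF A Fj th + Qfund q k A Fj th.
Proof.
have [cardth|cardth] := eqVneq #|pdom th| k.
  by rewrite DDsop_expand // sum_fundF_upd_rem.
have domth : (pdom th == A) = false.
  by apply/eqP => domA; move: cardth; rewrite domA cardA eqxx.
by rewrite /Dop /fundF /Qfund domth /= (negbTE cardth) mulr0 add0r.
Qed.

End FundamentalFunction.

Theorem lemma7p5
  (R : realFieldType) (Y : finType) (n : nat) (q : Y -> Y -> R)
  (m : nat) (lam : 'I_m.+1 -> R)
  (* Q is a symmetric irreducible stochastic matrix *)
  (Hnn : forall x y, 0 <= q x y)
  (Hstoch : forall x, \sum_(y : Y) q x y = 1)
  (Hsym : forall x y, q x y = q y x)
  (Hirr : irreducible_mat q)
  (* lam_0 = 1, ..., lam_m are the distinct eigenvalues of Q *)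
  (Hlam0 : lam ord0 = 1)
  (Hlinj : injective lam)
  (Heig : forall i, exists f : Y -> R, (exists y, f y != 0) /\ in_eigenspace q (lam i) f)
  (Hall : forall (mu : R) (f : Y -> R), (exists y, f y != 0) ->
            in_eigenspace q mu f -> exists i, mu = lam i)
  (k : nat) (Hk1 : (1 <= k)%N) (Hk2 : (k <= n - 1)%N)
  (a : 'I_m.+1 -> nat) (Hasum : (\sum_(i < m.+1) a i)%N = k.+1)
  (Ha0 : (1 <= a ord0)%N)
  (A : {set 'I_n}) (HA : #|A| = k)
  (* F in P_{k,a',A}: a linear combination of fundamental functions of type a' on A *)
  (r : nat) (c : 'I_r -> R)
  (idx : 'I_r -> 'I_n -> 'I_m.+1) (Fj : 'I_r -> 'I_n -> Y -> R)
  (Hfund : forall s, fund_data q lam (type_prime a) A (idx s) (Fj s)) :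
  let F := fun th : pfun Y n => \sum_(s < r) c s * fundF A (Fj s) th in
  forall th : pfun Y n,
    Dop k.+1 (Dsop k.+1 F) th =
      #|Y|%:R * (n - k)%:R * F th + \sum_(s < r) c s * Qfund q k A (Fj s) th.
Proof.
move=> F th.
have sum_Fj s j : j \in A -> forall y0,
    \sum_y Fj s j y = if in_W0b q (Fj s j) then #|Y|%:R * Fj s j y0 else 0.
  by move=> jA; apply: (sum_eigenspace Hnn Hstoch Hsym Hirr ((Hfund s).1 j jA)).
rewrite DDsop_sum mulr_sumr -big_split; apply: eq_bigr => s _.
by rewrite (DDsop_fundF HA (sum_Fj s)) mulrDr mulrCA.
Qed.
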